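(* Let $\Gamma$ be a connected $\mathbb Z$-leg-weighted graph, $w\in W(\Gamma)$ a weighting, and $\gamma$ a positive cycle for $w$. Let $\Gamma/\gamma$ be the graph obtained from $\Gamma$ by contracting every edge of $\gamma$, and $w|_{\Gamma/\gamma}$ the restricted weighting. Then $$c_w = c_{w|_{\Gamma/\gamma}}\times\{\mathbf 0\},$$ where $c_{w|_{\Gamma/\gamma}}\subseteq\mathbb Q_{\ge0}^{E(\Gamma/\gamma)}$ is the cone of the restricted weighting and $\mathbf 0$ is the zero vector of $\mathbb Q_{\ge0}^{E(\gamma)}$ (using $\mathbb Q_{\ge 0}^{E(\Gamma)}=\mathbb Q_{\ge0}^{E(\Gamma/\gamma)}\times\mathbb Q_{\ge0}^{E(\gamma)}$).
   Context: A graph consists of finite sets $V$ (vertices) and $H$ (half-edges), a map $\mathrm{end}\colon H\to V$, an involution $i$ of $H$, a genus $g\colon V\to\mathbb Z_{\ge0}$ and an integer twist $k$. Legs are fixed points of $i$; edges are pairs $\{h,i(h)\}$ with $h\neq i(h)$; a directed edge is a non-leg half-edge $h$ from $\mathrm{end}(h)$ to $\mathrm{end}(i(h))$. $\mathrm{val}(v)$ counts non-leg half-edges at $v$, $\kappa(v)=2g(v)-2+\mathrm{val}(v)$, $g(\Gamma)=b_1(\Gamma)+\sum g(v)$. A cycle is a closed walk of directed edges repeating no vertex or undirected edge. A weighting is $w\colon H\to\mathbb Z$ with $w(h)+w(i(h))=0$ for $h\ne i(h)$ and $\sum_{\mathrm{end}(h)=v}w(h)+k\kappa(v)=0$ for all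 $v$; $W(\Gamma)$ is the set of weightings with prescribed leg values (summing to $-k(2g(\Gamma)-2)$). Contracting edges (merging their endpoints, with genera of merged vertices adding up together with the first Betti number of the contracted subgraph) sends a weighting to a weighting on the contracted graph by restriction to the remaining half-edges. For a directed edge $e$ of a cycle $\gamma$, $w_\gamma(e)$ is the value of $w$ on the half-edge of $e$ at its source. $c_w\subseteq\mathbb Q_{\ge0}^{E}$ is the cone of $t$ with $\sum_{e\in\gamma}w_\gamma(e)t(e)=0$ for all cycles $\gamma$. A positive cycle for $w$ is a cycle $\gamma$ with $w_\gamma(e)>0$ for all $e\in\gamma$. *)

From mathcomp Require Import all_boot all_order all_algebra.
Set Implicit Arguments. Unset Strict Implicit. Unset Printing Implicit Defensive.
Import Order.TTheory GRing.Theory Num.Theory.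
Local Open Scope ring_scope.

Record graph := Graph {
  gV : finType;
  gH : finType;
  gend : gH -> gV;
  ginv : gH -> gH;
  ginvK : involutive ginv;
  ggen : gV -> nat;
  gtwist : int }.

Section GraphDefs.
Variable G : graph.

Definition is_leg (h : gH G) : bool := ginv h == h.

Definition valence (v : gV G) : nat :=
  #|[set h : gH G | (gend h == v) && ~~ is_leg h]|.

Definition kappa (v : gV G) : int := 2 * (ggen v)%:Z - 2 + (valence v)%:Z.

Definition adj : rel (gV G) :=
  fun u v => [exists h : gH G, [&& ~~ is_leg h, gend h == u & gend (ginv h) == v]].

Definition connected : Prop := forall u v : gV G, connect adj u v.

Definition is_weighting (w : gH G -> int) : Prop :=
  (forall h : gH G, ~~ is_leg h -> w h + w (ginv h) = 0) /\
  (forall v : gV G, \sum_(h : gH G | gend h == v) w h + gtwist G * kappa v = 0).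

(* A cycle: a nonempty sequence of directed edges (non-leg half-edges)
   h_1, ..., h_n, with the target of h_j the source of h_{j+1} (cyclically),
   repeating no vertex (sources pairwise distinct) and no undirected edge
   (the half-edges of s and their partners are pairwise distinct, which also
   forces every h_j to be a non-leg). *)
Definition is_cycle (s : seq (gH G)) : bool :=
  [&& s != [::],
      uniq (s ++ map (@ginv G) s),
      uniq (map (@gend G) s) &
      cycle (fun h h' => gend (ginv h) == gend h') s].

Definition positive_cycle (w : gH G -> int) (s : seq (gH G)) : bool :=
  is_cycle s && all (fun h => w h > 0) s.

Definition edge := {A : {set gH G} | [exists h : gH G, ~~ is_leg h && (A == [set h; ginv h])]}.

(* value of t : Q^E at a set of half-edges (0 if it is not an edge) *)
Definition tvalset (t : edge -> rat) (A : {set gH G}) : rat :=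
  if insub A is Some e then t e else 0.

Definition tval (t : edge -> rat) (h : gH G) : rat := tvalset t [set h; ginv h].

Definition cone (w : gH G -> int) (t : edge -> rat) : Prop :=
  (forall e : edge, 0 <= t e) /\
  (forall s : seq (gH G), is_cycle s ->
     \sum_(h <- s) (w h)%:~R * tval t h = 0).

Definition cyc_hs (s : seq (gH G)) : {set gH G} :=
  [set h | (h \in s) || (ginv h \in s)].

Definition adjS (S : {set gH G}) : rel (gV G) :=
  fun u v => [exists h in S, (gend h == u) && (gend (ginv h) == v)].

Definition rootS (S : {set gH G}) : gV G -> gV G := fingraph.root (adjS S).

Definition cV (S : {set gH G}) : {set gV G} := rootS S @: [set: gV G].

Definition cVt (S : {set gH G}) := {v : gV G | v \in cV S}.
Definition cHt (s : seq (gH G)) := {h : gH G | h \notin cyc_hs s}.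

Lemma cyc_hs_inv (s : seq (gH G)) (h : gH G) :
  (ginv h \notin cyc_hs s) = (h \notin cyc_hs s).
Proof. by rewrite !inE ginvK orbC. Qed.

Definition c_end (s : seq (gH G)) (h : cHt s) : cVt (cyc_hs s) :=
  exist _ (rootS (cyc_hs s) (gend (val h))) (imset_f _ (in_setT _)).

Definition c_inv (s : seq (gH G)) (h : cHt s) : cHt s :=
  exist _ (ginv (val h)) (eq_ind_r is_true (valP h) (cyc_hs_inv s (val h))).

Lemma c_invK (s : seq (gH G)) : involutive (@c_inv s).
Proof. by move=> h; apply: val_inj; rewrite /= ginvK. Qed.

(* genus of a vertex of the contraction: sum of the genera of the merged
   vertices plus the first Betti number (#edges - #vertices + 1) of the
   contracted connected subgraph *)
Definition c_gen (s : seq (gH G)) (v : cVt (cyc_hs s)) : nat :=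
  let S := cyc_hs s in
  (\sum_(u : gV G | rootS S u == val v) ggen u +
   ((#|[set h in S | rootS S (gend h) == val v]| %/ 2 + 1)
      - #|[set u : gV G | rootS S u == val v]|))%N.

Definition contract (s : seq (gH G)) : graph :=
  @Graph (cVt (cyc_hs s)) (cHt s) (@c_end s) (@c_inv s) (@c_invK s)
         (@c_gen s) (gtwist G).

Definition wres (s : seq (gH G)) (w : gH G -> int) : gH (contract s) -> int :=
  fun h => w (val h).

Definition edge_in (s : seq (gH G)) (e : edge) : bool :=
  [exists h : gH G, (h \in s) && (val e == [set h; ginv h])].

End GraphDefs.

Definition tres (G : graph) (s : seq (gH G)) (t : edge G -> rat) : edge (contract s) -> rat :=
  fun e => tvalset t [set val h | h in val e].


Arguments contract {G} s.
Arguments wres {G} s w h.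
Arguments tres {G} s t e.
Arguments edge_in {G} s e.

(* Along a positive cycle the weights are positive and t >= 0, so the cycle
   equation of gamma forces t to vanish on E(gamma).  Once t vanishes there,
   cycle sums agree between Gamma and Gamma/gamma: a cycle of Gamma projects,
   by dropping its gamma-edges, to a closed trail (closed walk repeating no
   edge) of Gamma/gamma, and a cycle of Gamma/gamma lifts to a closed trail of
   Gamma by inserting an arc of gamma at the contracted vertex.  A closed trail
   splits at a repeated vertex into two shorter closed trails, so its sum
   vanishes as soon as all cycle sums do. *)

From Pilot Require Import Defs.
From mathcomp Require Import all_boot all_order all_algebra.
From mathcomp Require Import zify.
Set Implicit Arguments. Unset Strict Implicit. Unset Printing Implicit Defensive.
Import Order.TTheory GRing.Theory Num.Theory.
Local Open Scope ring_scope.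

Lemma cycle_cat2 (T : Type) (e : rel T) x p1 z p2 :
  cycle e (x :: p1 ++ z :: p2) = path e x (rcons p1 z) && path e z (rcons p2 x).
Proof. by rewrite /= rcons_cat rcons_cons cat_path /= !rcons_path andbA. Qed.

Lemma cycle_filter (T : Type) (e : rel T) (P : pred T) :
  (forall x y z, ~~ P y -> e x y -> e y z -> e x z) ->
  forall c, cycle e c -> cycle e (filter P c).
Proof.
move=> e_skip.
have path_filter p x y : path e x (rcons p y) -> path e x (rcons (filter P p) y).
  elim: p x => [//|z p IHp] x /=; case/andP=> e_xz /IHp.
  case: ifP => [_ /= path_z|/negbT Pz]; first by rewrite e_xz path_z.
  case: (filter P p) => [|u q] /= /andP[e_zu path_q];
    by rewrite (e_skip _ _ _ Pz e_xz e_zu) ?path_q.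
case=> [//|x p] /=; case: ifP => [_ /=|/negbT Px /path_filter]; first exact: path_filter.
case: (filter P p) => [//|z q] /= /andP[e_xz]; rewrite !rcons_path => /andP[-> e_lx].
by rewrite (e_skip _ _ _ Px e_lx e_xz).
Qed.

Lemma map_not_uniq (T U : eqType) (f : T -> U) (s : seq T) :
  uniq s -> ~~ uniq (map f s) ->
  exists x y, [/\ x \in s, y \in s, x != y & f x = f y].
Proof.
case: s => [//|x0 s] us /(uniqPn (f x0))[i [j [ij]]].
rewrite size_map => js; have i_lt := ltn_trans ij js.
rewrite !(nth_map x0) // => fij; exists (nth x0 (x0 :: s) i), (nth x0 (x0 :: s) j).
by rewrite !mem_nth // nth_uniq // neq_ltn ij.
Qed.

Section ClosedTrails.
Variable G : graph.
Implicit Types (c p : seq (gH G)) (h : gH G).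

Definition walk_step : rel (gH G) := fun h h' => gend (ginv h) == gend h'.
Definition edge_simple c := uniq (c ++ map (@ginv G) c).
Definition closed_trail c := cycle walk_step c && edge_simple c.

Lemma is_cycle_trail c :
  is_cycle c = [&& c != [::], uniq (map (@gend G) c) & closed_trail c].
Proof.
by apply/and4P/and3P => [[c0 simple_c uniq_c cyc_c]|[c0 uniq_c /andP[cyc_c simple_c]]];
  split=> //; apply/andP.
Qed.

Lemma edge_simple_rot i c : edge_simple (rot i c) = edge_simple c.
Proof. by apply/perm_uniq/perm_cat; [|apply: perm_map]; rewrite perm_rot. Qed.

Lemma edge_simple_cat p1 p2 : edge_simple (p1 ++ p2) =
  [&& edge_simple p1, ~~ has (mem (p1 ++ map (@ginv G) p1)) (p2 ++ map (@ginv G) p2)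
    & edge_simple p2].
Proof.
rewrite /edge_simple -cat_uniq map_cat; apply/perm_uniq.
by rewrite perm_catACA.
Qed.

Lemma edge_simple_uniq c : edge_simple c -> uniq c.
Proof. by rewrite /edge_simple cat_uniq => /andP[]. Qed.

Lemma is_cycle_rot i c : is_cycle c -> is_cycle (rot i c).
Proof.
rewrite !is_cycle_trail /closed_trail rot_cycle edge_simple_rot map_rot rot_uniq.
by rewrite -!size_eq0 size_rot.
Qed.

Lemma is_cycle_nonleg c h : is_cycle c -> h \in c -> ~~ is_leg h.
Proof.
case/and4P=> _ + _ _ hc; rewrite cat_uniq => /and3P[_ /hasPn/(_ (ginv h)) fresh_inv _].
by apply/negP => /eqP leg; move: (fresh_inv (map_f _ hc)); rewrite leg hc.
Qed.

Lemma closed_trail_split c : closed_trail c -> ~~ uniq (map (@gend G) c) ->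
  exists i x p1 z p2, [/\ rot i c = x :: p1 ++ z :: p2,
                           closed_trail (x :: p1) & closed_trail (z :: p2)].
Proof.
case/andP=> cyc_c simple_c.
have uniq_c := edge_simple_uniq simple_c.
case/(map_not_uniq uniq_c) => x [z [xc zc xz gxz]].
case: (rot_to_arc uniq_c xc zc xz) => i p1 p2 _ _ ec.
move: cyc_c simple_c; rewrite -(rot_cycle i) -(edge_simple_rot i) ec -cat_cons.
rewrite cycle_cat2 !rcons_path edge_simple_cat.
case/andP=> /andP[path_p1 step_p1] /andP[path_p2 step_p2] /and3P[simple_p1 _ simple_p2].
move: step_p1 step_p2; rewrite /walk_step -gxz => step_p1; rewrite gxz => step_p2.
by exists i, x, p1, z, p2; rewrite /closed_trail /= !rcons_path /walk_step;
  split; rewrite ?path_p1 ?path_p2 ?step_p1 ?step_p2.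
Qed.

Lemma closed_trail_sum0 (R : nmodType) (f : gH G -> R) :
  (forall c, is_cycle c -> \sum_(h <- c) f h = 0) ->
  forall c, closed_trail c -> \sum_(h <- c) f h = 0.
Proof.
move=> f_cycle c; have [n] := ubnP (size c); elim: n c => // n IHn c size_c trail_c.
have [->|c0] := eqVneq c [::]; first by rewrite big_nil.
have [uniq_c|] := boolP (uniq (map (@gend G) c)).
  by apply: f_cycle; rewrite is_cycle_trail c0 uniq_c.
case/(closed_trail_split trail_c) => i [x [p1 [z [p2 [ec trail1 trail2]]]]].
have size_p12 : size c = (size p1 + size p2).+2.
  by rewrite -(size_rot i) ec /= size_cat /= addnS.
by rewrite -(perm_big _ (permEl (perm_rot i c))) ec -cat_cons big_cat /= !IHn ?addr0 //=;
  lia.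
Qed.

End ClosedTrails.

Arguments walk_step {G}.

Section EdgeValues.
Variable G : graph.
Implicit Types (t : edge G -> rat) (h : gH G).

Lemma tvalset_ge0 t A : (forall e, 0 <= t e) -> 0 <= tvalset t A.
Proof. by move=> t_ge0; rewrite /tvalset; case: insub. Qed.

Lemma tval_ginv t h : Defs.tval t (ginv h) = Defs.tval t h.
Proof. by rewrite /Defs.tval ginvK setUC. Qed.

Lemma tval_edge t (e : edge G) h : val e = [set h; ginv h] -> Defs.tval t h = t e.
Proof. by move=> eh; rewrite /Defs.tval /tvalset -eh valK. Qed.

Lemma edge_in_tval t s :
  (forall e, edge_in s e -> t e = 0) <-> (forall h, h \in s -> Defs.tval t h = 0).
Proof.
split=> [t_s h hs|t_s e /existsP[h /andP[hs /eqP eh]]]; last by rewrite -(tval_edge t eh) t_s.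
rewrite /Defs.tval /tvalset; case: insubP => // e _ eh.
by apply: t_s; apply/existsP; exists h; rewrite hs eh eqxx.
Qed.

Lemma tval_cyc_hs0 t s : (forall h, h \in s -> Defs.tval t h = 0) ->
  forall h, h \in cyc_hs s -> Defs.tval t h = 0.
Proof. by move=> t_s h; rewrite inE => /orP[/t_s //|/t_s]; rewrite tval_ginv. Qed.

Lemma cone_positive_cycle0 (w : gH G -> int) t s :
  cone w t -> positive_cycle w s -> forall h, h \in s -> Defs.tval t h = 0.
Proof.
case=> t_ge0 t_cycle /andP[cyc_s /allP w_pos] h hs.
have summand_ge0 x : x \in s -> 0 <= (w x)%:~R * Defs.tval t x.
  by move=> xs; rewrite mulr_ge0 ?tvalset_ge0 // ler0z ltW ?w_pos.
move/eqP: (t_cycle s cyc_s); rewrite big_seq psumr_eq0 => [/allP/(_ h hs)|//].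
by rewrite hs mulf_eq0 intr_eq0 gt_eqF ?w_pos // => /eqP.
Qed.

End EdgeValues.

Section Contraction.
Variable G : graph.
Variable s : seq (gH G).
Hypothesis cyc_s : is_cycle s.
Implicit Types (x y : gV G).

Local Notation S := (cyc_hs s).
Local Notation r := (rootS S).

Definition cycle_vertices : {set gV G} := [set gend h | h in s].
Local Notation Vs := cycle_vertices.

Lemma cyc_hs_ginv (h : gH G) : (ginv h \in S) = (h \in S).
Proof. exact: negb_inj (cyc_hs_inv s h). Qed.

Lemma cycle_target_in (h : gH G) : h \in s -> gend (ginv h) \in Vs.
Proof.
case/and4P: cyc_s => _ _ _ cyc hs.
by move/eqP: (next_cycle cyc hs) => ->; rewrite imset_f ?mem_next.
Qed.

Lemma cyc_hs_ends (h : gH G) : h \in S -> (gend h \in Vs) && (gend (ginv h) \in Vs).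
Proof.
rewrite inE => /orP[hs|ihs]; first by rewrite imset_f ?cycle_target_in.
by rewrite -{1}(ginvK h) cycle_target_in ?imset_f.
Qed.

Lemma adjS_sym : symmetric (adjS S).
Proof.
suff adj_sym x y : adjS S x y -> adjS S y x by move=> x y; apply/idP/idP; apply: adj_sym.
case/existsP=> h /andP[hS /andP[/eqP <- /eqP <-]]; apply/existsP; exists (ginv h).
by rewrite cyc_hs_ginv hS ginvK !eqxx.
Qed.

Lemma adjS_ends x y : adjS S x y -> (x \in Vs) && (y \in Vs).
Proof. by case/existsP=> h /andP[/cyc_hs_ends + /andP[/eqP <- /eqP <-]]. Qed.

Lemma walk_adjS (h : gH G) p : {subset h :: p <= s} -> path walk_step h p ->
  path (adjS S) (gend h) (map (@gend G) p).
Proof.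
elim: p h => //= h' p IHp h sub_s /andP[step path_p].
have sub_p : {subset h' :: p <= s} by move=> x xp; apply: sub_s; rewrite inE xp orbT.
rewrite IHp // andbT; apply/existsP; exists h.
by rewrite inE sub_s ?mem_head //= eqxx.
Qed.

Lemma cycle_vertices_connect x y : x \in Vs -> y \in Vs -> connect (adjS S) x y.
Proof.
have [h0 [p es]] : exists h0 p, s = h0 :: p.
  by case/and4P: cyc_s; case: (s) => [//|h0 p]; exists h0, p.
have path_p : path walk_step h0 p.
  by case/and4P: cyc_s => _ _ _; rewrite es /= rcons_path => /andP[].
have sub_s : {subset h0 :: p <= s} by rewrite es.
have to_h0 (h : gH G) : h \in s -> connect (adjS S) (gend h0) (gend h).
  rewrite [in h \in _]es => hs.
  exact: (path_connect (walk_adjS sub_s path_p) (map_f (@gend G) hs)).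
case/imsetP=> hx hxs -> /imsetP[hy hys ->].
apply: (connect_trans _ (to_h0 _ hys)).
by rewrite (sym_connect_sym adjS_sym) to_h0.
Qed.

Lemma rootS_eq x y : (r x == r y) = (x == y) || (x \in Vs) && (y \in Vs).
Proof.
rewrite (sameP eqP (fingraph.rootP (sym_connect_sym adjS_sym))).
apply/idP/idP => [xy|/orP[/eqP ->|/andP[]]]; [|exact: connect0|exact: cycle_vertices_connect].
have closed_Vs : closed (adjS S) Vs by move=> u v /adjS_ends/andP[-> ->].
rewrite -(closed_connect closed_Vs xy) andbb.
by case/connectP: xy => [[_ ->|z p /= /andP[/adjS_ends/andP[-> _] _] _]]; rewrite ?eqxx ?orbT.
Qed.

Lemma is_leg_contract (h : gH (contract s)) : is_leg h = is_leg (val h).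
Proof. by rewrite /is_leg -val_eqE. Qed.

Lemma walk_step_contract :
  @walk_step (contract s) =2 relpre val (fun h h' => r (gend (ginv h)) == r (gend h')).
Proof. by move=> h h'; rewrite /walk_step -val_eqE. Qed.

Lemma tval_tres (t : edge G -> rat) (h : gH (contract s)) :
  ~~ is_leg h -> Defs.tval (tres s t) h = Defs.tval t (val h).
Proof.
move=> nonleg_h; rewrite {1}/Defs.tval /tvalset; case: insubP => [e _ eh|/negP[]].
  by rewrite /tres eh imsetU1 imset_set1.
by apply/existsP; exists h; rewrite nonleg_h eqxx.
Qed.

Lemma map_ginv_val (c : seq (gH (contract s))) :
  map (@ginv G) (map val c) = map val (map (@ginv (contract s)) c).
Proof. by rewrite -!map_comp. Qed.

Lemma edge_simple_map_val (c : seq (gH (contract s))) :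
  edge_simple (map val c) = edge_simple c.
Proof. by rewrite /edge_simple map_ginv_val -map_cat (map_inj_uniq val_inj). Qed.

Lemma map_val_pmap_insub (c : seq (gH G)) :
  map val (pmap insub c : seq (gH (contract s))) = [seq h <- c | h \notin S].
Proof.
rewrite (pmap_filter (@insubK _ _ (cHt s))).
by apply: eq_filter => h; rewrite isSome_insub.
Qed.

Lemma closed_trail_project c : closed_trail c ->
  closed_trail (pmap insub c : seq (gH (contract s))).
Proof.
case/andP=> cyc_c simple_c; apply/andP; split.
  rewrite (eq_cycle walk_step_contract) -cycle_map map_val_pmap_insub.
  apply: cycle_filter.
    move=> u m v; rewrite negbK => /cyc_hs_ends/andP[mVs imVs] /eqP -> /eqP <-.
    by rewrite rootS_eq mVs imVs orbT.
  by apply: sub_cycle cyc_c => u v /eqP ->.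
rewrite -edge_simple_map_val map_val_pmap_insub; apply: subseq_uniq simple_c.
by apply: cat_subseq; [|apply: map_subseq]; apply: filter_subseq.
Qed.

Lemma walk_lift (h : gH (contract s)) (p : seq (gH (contract s))) :
  {in p, forall h', gend (val h') \notin Vs} ->
  path walk_step h p -> path walk_step (val h) (map val p).
Proof.
elim: p h => //= h' p IHp h out_p /andP[step path_p].
rewrite IHp // => [|x xp]; last by apply: out_p; rewrite inE xp orbT.
move: step; rewrite walk_step_contract /= rootS_eq.
by rewrite (negbTE (out_p h' (mem_head _ _))) andbF orbF andbT.
Qed.

Lemma contract_cycle_rot (c : seq (gH (contract s))) : is_cycle c ->
  exists i h p, rot i c = h :: p /\
                {in p, forall h' : gH (contract s), gend (val h') \notin Vs}.
Proof.
move=> cyc_c; have [/hasP[h hc hVs]|/hasPn out_c] :=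
  boolP (has (fun h : gH (contract s) => gend (val h) \in Vs) c).
  case: (rot_to hc) => i p ec; exists i, h, p; split=> // h' h'p.
  apply: contraTN h'p => h'Vs.
  have /and4P[_ _ + _] := is_cycle_rot i cyc_c; rewrite ec /= => /andP[+ _].
  apply: contra => h'p; apply/mapP; exists h' => //; apply: val_inj => /=.
  by apply/eqP; rewrite rootS_eq hVs h'Vs orbT.
case/and4P: cyc_c; case: c out_c => [//|h p] out_c _ _ _ _.
by exists 0%N, h, p; rewrite rot0; split=> // h' h'p; apply: out_c; rewrite inE h'p orbT.
Qed.

Lemma cycle_arc x y : x \in Vs -> y \in Vs -> x != y ->
  exists h p, [/\ gend h = x, gend (ginv (last h p)) = y, path walk_step h p,
                  {subset h :: p <= s} & edge_simple (h :: p)].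
Proof.
case/imsetP=> hx hxs -> /imsetP[hy hys ->] nxy.
have nhxy : hx != hy by apply: contraNneq nxy => ->.
move: (cyc_s); rewrite is_cycle_trail => /and3P[_ _ /andP[cyc simple_s]].
case: (rot_to_arc (edge_simple_uniq simple_s) hxs hys nhxy) => i p1 p2 _ _ es.
move: cyc simple_s; rewrite -(rot_cycle i) -(edge_simple_rot i) es -cat_cons.
rewrite cycle_cat2 rcons_path edge_simple_cat => /andP[/andP[path_p1 /eqP step] _].
case/and3P=> simple_p1 _ _; exists hx, p1; split=> // h hp1.
by rewrite -(mem_rot i) es -cat_cons mem_cat hp1.
Qed.

(* The lift of a cycle of Gamma/gamma closes up in Gamma unless it passes
   through the contracted vertex, where an arc of gamma is inserted. *)
Lemma closed_trail_lift (c : seq (gH (contract s))) : is_cycle c ->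
  exists i p, closed_trail (map val (rot i c) ++ p) /\ {subset p <= S}.
Proof.
move=> cyc_c; have [i [h [p [ec out_p]]]] := contract_cycle_rot cyc_c.
exists i; rewrite ec.
move: (is_cycle_rot i cyc_c); rewrite ec is_cycle_trail => /and3P[_ _ /andP[]].
rewrite /= rcons_path walk_step_contract /= => /andP[path_p last_step] simple_hp.
have path_lift := walk_lift out_p path_p.
have simple_lift : edge_simple (map val (h :: p)) by rewrite edge_simple_map_val.
have [closes|opens] := eqVneq (gend (ginv (val (last h p)))) (gend (val h)).
  exists [::]; split=> //; rewrite cats0 /closed_trail simple_lift andbT /=.
  by rewrite rcons_path path_lift last_map /walk_step closes /=.
move: last_step; rewrite rootS_eq (negbTE opens) /= => /andP[xVs yVs].
have [h0 [p0 [start stop path_p0 sub_s simple_p0]]] := cycle_arc xVs yVs opens.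
have sub_S : {subset h0 :: p0 <= S} by move=> x /sub_s xs; rewrite inE xs.
exists (h0 :: p0); split=> [|x /sub_S //]; apply/andP; split.
  rewrite cycle_cat2 !rcons_path path_lift path_p0 /walk_step last_map.
  by rewrite start stop !eqxx.
rewrite -cat_cons edge_simple_cat simple_lift simple_p0 andbT; apply/hasPn => x x_arc.
have : x \in S.
  move: x_arc; rewrite mem_cat => /orP[/sub_S //|/mapP[y /sub_S y_S ->]].
  by rewrite cyc_hs_ginv.
apply: contraL; rewrite -[_ :: map _ p]/(map val (h :: p)) map_ginv_val -map_cat.
by case/mapP=> y _ ->; apply: (valP y).
Qed.

Lemma sum_project (R : nmodType) (F : gH G -> R) (c : seq (gH G)) :
  (forall h, h \in S -> F h = 0) ->
  \sum_(h <- c) F h = \sum_(h <- pmap insub c : seq (gH (contract s))) F (val h).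
Proof.
move=> F_S; rewrite -(big_map val xpredT) map_val_pmap_insub big_filter [RHS]big_mkcond.
by apply: eq_bigr => h _; case: ifPn => // /negPn/F_S.
Qed.

Lemma cone_contract (w : gH G -> int) (t : edge G -> rat) :
  (forall h, h \in s -> Defs.tval t h = 0) -> cone w t -> cone (wres s w) (tres s t).
Proof.
move=> /tval_cyc_hs0 t_S [t_ge0 t_cycle]; split=> [e|c cyc_c]; first exact: tvalset_ge0.
have [i [p [trail_W sub_p]]] := closed_trail_lift cyc_c.
rewrite -[RHS](closed_trail_sum0 t_cycle trail_W) big_cat /= [X in _ + X]big1_seq ?addr0;
  last by move=> h /andP[_ /sub_p /t_S ->]; rewrite mulr0.
rewrite big_map (perm_big _ (permEl (perm_rot i c))); apply: eq_big_seq => h hc.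
by rewrite tval_tres // (is_cycle_nonleg cyc_c hc).
Qed.

Lemma cone_uncontract (w : gH G -> int) (t : edge G -> rat) :
  (forall h, h \in s -> Defs.tval t h = 0) -> cone (wres s w) (tres s t) -> cone w t.
Proof.
move=> /tval_cyc_hs0 t_S [tres_ge0 tres_cycle]; split=> [e|c cyc_c].
  have /existsP[h /andP[nonleg_h /eqP eh]] := valP e; rewrite -(tval_edge t eh).
  have [hS|hS] := boolP (h \in S); first by rewrite t_S.
  rewrite -[h]/(val (exist _ h hS : gH (contract s))) -tval_tres ?is_leg_contract //.
  exact: tvalset_ge0.
have summand_S h : h \in S -> (w h)%:~R * Defs.tval t h = 0 by move=> /t_S ->; rewrite mulr0.
rewrite (sum_project c summand_S).
apply: closed_trail_sum0 => [c' cyc_c'|]; last first.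
  by apply: closed_trail_project; move: cyc_c; rewrite is_cycle_trail => /and3P[].
rewrite -[RHS](tres_cycle c' cyc_c'); apply: eq_big_seq => h hc.
by rewrite tval_tres // (is_cycle_nonleg cyc_c' hc).
Qed.

End Contraction.

Theorem lemma3p10 (G : graph) (w : gH G -> int) (s : seq (gH G)) :
  connected G -> is_weighting w -> positive_cycle w s ->
  forall t : edge G -> rat,
    cone w t <->
    (cone (wres s w) (tres s t) /\ (forall e : edge G, edge_in s e -> t e = 0)).
Proof.
move=> _ _ pos_s t; have cyc_s : is_cycle s by case/andP: pos_s.
split=> [t_cone|[tres_cone /edge_in_tval t_s]]; last exact: cone_uncontract t_s tres_cone.
have t_s := cone_positive_cycle0 t_cone pos_s.
by split; [apply: cone_contract t_s t_cone | apply/edge_in_tval].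
Qed.
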